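(* Let $L^x,L^y>0$, let $i\neq j$ be two boxes, each box $k\in\{i,j\}$ having center $(c^x_k,c^y_k)$, side lengths $(\ell^x_k,\ell^y_k)$, area $\alpha_k>0$ and constants $lb^s_k,ub^s_k$. Let $$Q^{FLP}=\{(c_i,c_j,\ell_i,\ell_j)\in\mathbb{R}^8:\ \tfrac12\ell^s_k\le c^s_k\le L^s-\tfrac12\ell^s_k,\ lb^s_k\le\ell^s_k\le ub^s_k,\ \ell^x_k\ell^y_k\ge\alpha_k\ \ \forall s\in\{x,y\},k\in\{i,j\}\}.$$ Let $E^U$ be the set of $(c,\ell,u)$ with $(c,\ell)=(c_i,c_j,\ell_i,\ell_j)\in Q^{FLP}$, $u=(u^s_{p,q})_{s\in\{x,y\},(p,q)\in\{(i,j),(j,i)\}}\in\{0,1\}^4$ having exactly one entry equal to $1$, and $u^s_{p,q}=1\Rightarrow\mathscr{B}_p\leftarrow_s\mathscr{B}_q$. Let $E^8$ be the set of $(c,\ell,z)$ with $(c,\ell)\in Q^{FLP}$, $z=(z^s_{p,q})\in\{0,1\}^4$ not identically zero, $z^s_{i,j}+z^s_{j,i}\le1$ for each $s$, $z^s_{p,q}=1\Rightarrow\mathscr{B}_p\leftarrow_s\mathscr{B}_q$, and $z^s_{i,j}=z^s_{j,i}=0\Rightarrow(\mathscr{B}_i\not\leftarrow_s\mathscr{B}_j$ and $\mathscr{B}_j\not\leftarrow_s\mathscr{B}_i)$. Suppose $a,b\in\mathbb{R}^4$, $\delta=(\delta^s_{p,q})\in\mathbb{R}^4$ and $f\in\mathbb{R}$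 are such that $a^Tc+b^T\ell+\delta^Tu\le f$ for all $(c,\ell,u)\in E^U$. If $\delta^y_{i,j}=\delta^y_{j,i}=0$ or $\delta^x_{i,j}=\delta^x_{j,i}=0$, then $a^Tc+b^T\ell+\delta^Tz\le f$ for all $(c,\ell,z)\in E^8$ (with $\delta^s_{p,q}$ multiplying $z^s_{p,q}$).
   Context: $\mathscr{B}_p\leftarrow_s\mathscr{B}_q$ means $c^s_p+\tfrac12\ell^s_p\le c^s_q-\tfrac12\ell^s_q$, and $\mathscr{B}_p\not\leftarrow_s\mathscr{B}_q$ means $c^s_p+\tfrac12\ell^s_p\ge c^s_q-\tfrac12\ell^s_q$. $E^U$ and $E^8$ are the paper's embeddings $\operatorname{Em}(Q^{FLP},D^4,U^4)$ and $\operatorname{Em}(Q^{FLP},D^8,C^8)$. In the paper $ub^s_k=\min\{\sqrt{\alpha_k\beta_k},L^s\}$, $lb^s_k=\beta_k/ub^s_k$. *)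

From Stdlib Require Import Reals.
Open Scope R_scope.

Inductive dir := DX | DY.
Inductive box := BI | BJ.

Definition other (k : box) : box := match k with BI => BJ | BJ => BI end.

Definition before (c l : dir -> box -> R) (s : dir) (p q : box) : Prop :=
  c s p + l s p / 2 <= c s q - l s q / 2.

Definition not_before (c l : dir -> box -> R) (s : dir) (p q : box) : Prop :=
  c s p + l s p / 2 >= c s q - l s q / 2.

Definition in_QFLP (L : dir -> R) (alpha : box -> R) (lb ub : dir -> box -> R)
  (c l : dir -> box -> R) : Prop :=
  forall (s : dir) (k : box),
    l s k / 2 <= c s k <= L s - l s k / 2 /\
    lb s k <= l s k <= ub s k /\
    l DX k * l DY k >= alpha k.

Definition sum4 (f : dir -> box -> R) : R :=
  f DX BI + f DX BJ + f DY BI + f DY BJ.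

(* Variables indexed by (s, p) stand for the entry with ordered pair (p, other p). *)
Definition objective (a b delta : dir -> box -> R) (c l u : dir -> box -> R) : R :=
  sum4 (fun s k => a s k * c s k) + sum4 (fun s k => b s k * l s k)
  + sum4 (fun s p => delta s p * u s p).

Definition binary (u : dir -> box -> R) : Prop :=
  forall s p, u s p = 0 \/ u s p = 1.

Definition in_EU (L : dir -> R) (alpha : box -> R) (lb ub : dir -> box -> R)
  (c l u : dir -> box -> R) : Prop :=
  in_QFLP L alpha lb ub c l /\
  binary u /\
  (exists s p, u s p = 1 /\ forall s' p', (s', p') <> (s, p) -> u s' p' = 0) /\
  (forall s p, u s p = 1 -> before c l s p (other p)).

Definition in_E8 (L : dir -> R) (alpha : box -> R) (lb ub : dir -> box -> R)
  (c l z : dir -> box -> R) : Prop :=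
  in_QFLP L alpha lb ub c l /\
  binary z /\
  ~ (forall s p, z s p = 0) /\
  (forall s, z s BI + z s BJ <= 1) /\
  (forall s p, z s p = 1 -> before c l s p (other p)) /\
  (forall s, z s BI = 0 -> z s BJ = 0 ->
     not_before c l s BI BJ /\ not_before c l s BJ BI).

(** Let [t] be the direction on which [delta] vanishes and take a point of
    [E^8].  If [z] has a 1 in the other direction, at [(s, p)], it is the only
    1 there, so [delta^T z = delta s p]; otherwise all 1s of [z] lie in direction
    [t] and [delta^T z = 0 = delta t p] for any [p] with [z t p = 1].  Either way
    the objective at [z] equals the objective at the unit vector [e_(s,p)], and
    [(c, l, e_(s,p))] lies in [E^U] because [z s p = 1] forces [B_p <-_s B_q]. *)

From Stdlib Require Import Reals Lra.
Open Scope R_scope.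

Definition other_dir (s : dir) : dir := match s with DX => DY | DY => DX end.

Lemma dir_box_eq_dec (x y : dir * box) : {x = y} + {x <> y}.
Proof. decide equality; decide equality. Defined.

Definition unit_vec (s : dir) (p : box) : dir -> box -> R :=
  fun s' p' => if dir_box_eq_dec (s', p') (s, p) then 1 else 0.

Lemma unit_vec_in_EU L alpha lb ub c l s p :
  in_QFLP L alpha lb ub c l -> before c l s p (other p) ->
  in_EU L alpha lb ub c l (unit_vec s p).
Proof.
  intros HQ Hbefore; unfold unit_vec.
  split; [exact HQ |]; split; [| split].
  - intros s' p'; destruct dir_box_eq_dec; auto.
  - exists s, p; split.
    + destruct dir_box_eq_dec as [_ | Hne]; [reflexivity | contradiction].
    + intros s' p' Hne; destruct dir_box_eq_dec; [contradiction | reflexivity].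
  - intros s' p'; destruct dir_box_eq_dec as [Heq | _]; [| lra].
    now injection Heq as -> ->.
Qed.

Lemma objective_unit_vec a b delta c l s p :
  objective a b delta c l (unit_vec s p) =
  sum4 (fun s k => a s k * c s k) + sum4 (fun s k => b s k * l s k) + delta s p.
Proof. destruct s, p; unfold objective, sum4, unit_vec; cbn; ring. Qed.

Lemma row_at_most_one (z : dir -> box -> R) (s : dir) :
  binary z -> z s BI + z s BJ <= 1 ->
  (z s BI = 0 /\ z s BJ = 0) \/ exists p, z s p = 1 /\ z s (other p) = 0.
Proof.
  intros Hbin Hrow.
  destruct (Hbin s BI) as [HI | HI], (Hbin s BJ) as [HJ | HJ].
  - now left.
  - right; now exists BJ.
  - right; now exists BI.
  - lra.
Qed.

Lemma objective_eq_unit_vec a b delta c l (z : dir -> box -> R) (t : dir) :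
  binary z -> (forall s, z s BI + z s BJ <= 1) -> ~ (forall s p, z s p = 0) ->
  delta t BI = 0 -> delta t BJ = 0 ->
  exists s p, z s p = 1 /\
    objective a b delta c l z = objective a b delta c l (unit_vec s p).
Proof.
  intros Hbin Hrows Hnz HdI HdJ.
  destruct (row_at_most_one z (other_dir t) Hbin (Hrows _))
    as [[HzI HzJ] | [p [Hp Hother]]].
  - assert (Hnz_t : ~ (z t BI = 0 /\ z t BJ = 0)).
    { intros [HtI HtJ]; apply Hnz; intros [] []; destruct t; assumption. }
    destruct (row_at_most_one z t Hbin (Hrows _)) as [Hzero | [p [Hp Hother]]];
      [contradiction |].
    exists t, p; split; [exact Hp |].
    rewrite objective_unit_vec.
    destruct t, p; cbn in *; unfold objective, sum4;
      rewrite ?HdI, ?HdJ, ?HzI, ?HzJ; ring.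
  - exists (other_dir t), p; split; [exact Hp |].
    rewrite objective_unit_vec.
    destruct t, p; cbn in *; unfold objective, sum4;
      rewrite ?HdI, ?HdJ, ?Hp, ?Hother; ring.
Qed.

Theorem proposition6p2 (L : dir -> R) (alpha : box -> R) (lb ub : dir -> box -> R)
  (a b delta : dir -> box -> R) (f : R) :
  (forall s, 0 < L s) ->
  (forall k, 0 < alpha k) ->
  (forall c l u, in_EU L alpha lb ub c l u -> objective a b delta c l u <= f) ->
  ((delta DY BI = 0 /\ delta DY BJ = 0) \/ (delta DX BI = 0 /\ delta DX BJ = 0)) ->
  forall c l z, in_E8 L alpha lb ub c l z -> objective a b delta c l z <= f.
Proof.
  intros _ _ Hvalid Hdelta c l z [HQ [Hbin [Hnz [Hrows [Hbefore _]]]]].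
  assert (Hsame : exists s p, z s p = 1 /\
            objective a b delta c l z = objective a b delta c l (unit_vec s p)).
  { destruct Hdelta as [[HdI HdJ] | [HdI HdJ]];
      eapply objective_eq_unit_vec; eassumption. }
  destruct Hsame as [s [p [Hp ->]]].
  apply Hvalid, unit_vec_in_EU; [exact HQ | exact (Hbefore s p Hp)].
Qed.
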